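(* Let $q$ be a power of $2$, let $a,b\in\mathbb{F}_q$ with $b\ne0$, and let $n\ge2$ be an integer with $\gcd(n+1,q)=1$. Then $n$ is even, and $\hat C_n(a,b)$ is LCD if and only if $$a/b\notin\{-1/b+\theta^i+\theta^{-i} : 1\le i\le n/2\},$$ where $\theta\in\overline{\mathbb{F}}_q$ is a primitive $(n+1)$-th root of unity.
   Context: For $a,b\in\mathbb{F}_q$ and $n\ge 2$, $\hat T_n(a,b)$ denotes the $n\times n$ symmetric tridiagonal Toeplitz matrix over $\mathbb{F}_q$ with all diagonal entries equal to $a$, all entries on the first super- and sub-diagonals equal to $b$, and all other entries $0$. $\hat C_n(a,b)$ is the $[2n,n]$ linear code over $\mathbb{F}_q$ with generator matrix $[I_n\mid \hat T_n(a,b)]$. A linear code $C$ is LCD if $C\cap C^\perp=\{0\}$ (Euclidean dual). *)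

From HB Require Import structures.
From mathcomp Require Import all_boot all_order all_algebra all_field.
Set Implicit Arguments. Unset Strict Implicit. Unset Printing Implicit Defensive.
Import GRing.Theory.
Local Open Scope ring_scope.

Definition trid_toeplitz (F : nzRingType) (n : nat) (a b : F) : 'M[F]_n :=
  \matrix_(i < n, j < n)
     if i == j then a
     else if (i.+1 == j :> nat) || (j.+1 == i :> nat) then b else 0.

Definition gen_C (F : nzRingType) (n : nat) (a b : F) : 'M[F]_(n, n + n) :=
  row_mx 1%:M (trid_toeplitz n a b).

Definition in_code (F : fieldType) (m N : nat) (G : 'M[F]_(m, N)) (x : 'rV[F]_N) : Prop :=
  (x <= G)%MS.

Definition in_dual (F : fieldType) (m N : nat) (G : 'M[F]_(m, N)) (x : 'rV[F]_N) : Prop :=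
  forall c : 'rV[F]_N, in_code G c -> x *m c^T = 0.

Definition is_LCD (F : fieldType) (m N : nat) (G : 'M[F]_(m, N)) : Prop :=
  forall x : 'rV[F]_N, in_code G x -> in_dual G x -> x = 0.

From HB Require Import structures.
From mathcomp Require Import all_boot all_order all_algebra all_field.
From mathcomp Require Import zify ring.
Set Implicit Arguments. Unset Strict Implicit. Unset Printing Implicit Defensive.
Import GRing.Theory.
Local Open Scope ring_scope.

(* Write U_j for the Chebyshev-type sequence U_0 = 0, U_1 = 1,
   U_{j+2} = x U_{j+1} - U_j.  The proof has three independent parts.
   - Codes: the systematic code [I | A] is LCD iff I + A A^T is invertible.
     For A = T := \hat T_n(a,b), which is symmetric, in characteristic 2 we
     get I + T^2 = (I + T)^2, so LCD iff I + T = \hat T_n(1+a,b) is invertible.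
   - Tridiagonal matrices: a row vector is in the left kernel of \hat T_n(c,b)
     iff its entries (padded with zeros at both ends) satisfy the recurrence
     of U_j at x = -c/b; hence \hat T_n(c,b) is invertible iff U_{n+1}(x) != 0.
   - Roots: in characteristic 2, U_{2m+1} = (U_{m+1} + U_m)^2, and the m
     distinct values theta^i + theta^-i (1 <= i <= m) are roots of the degree
     m polynomial U_{m+1} + U_m, hence all of its roots.
   The theorem follows with n = 2m (n is even since n+1 is coprime to 2), after
   transporting U_{n+1}(-(1+a)/b) along f and noting that in characteristic 2
   a/b = -1/b - (1+a)/b. *)

Fixpoint chebU (R : nzRingType) (x : R) (j : nat) : R :=
  match j with
  | 0 => 0
  | 1 => 1
  | (j'.+1 as j1).+1 => x * chebU x j1 - chebU x j'
  end.

Lemma chebUSS (R : nzRingType) (x : R) j :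
  chebU x j.+2 = x * chebU x j.+1 - chebU x j.
Proof. by []. Qed.

Lemma nat_ind2 (P : nat -> Prop) :
  P 0%N -> P 1%N -> (forall j, P j -> P j.+1 -> P j.+2) -> forall j, P j.
Proof.
move=> P0 P1 PS j; suff: P j /\ P j.+1 by case.
by elim: j => [|j [IHj IHj1]]; split => //; apply: PS.
Qed.

Lemma rmorph_chebU (R S : nzRingType) (f : {rmorphism R -> S}) x j :
  f (chebU x j) = chebU (f x) j.
Proof.
elim/nat_ind2: j => [||j IH1 IH2]; rewrite ?rmorph0 ?rmorph1 //.
by rewrite !chebUSS rmorphB rmorphM IH1 IH2.
Qed.

Lemma horner_chebU (R : comNzRingType) (x : R) j : (chebU 'X j).[x] = chebU x j.
Proof.
elim/nat_ind2: j => [||j IH1 IH2]; rewrite ?hornerC //.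
by rewrite !chebUSS hornerD hornerN hornerM hornerX IH1 IH2.
Qed.

Lemma chebU_add (R : comNzRingType) (x : R) i j :
  chebU x (i + j).+1 = chebU x i.+1 * chebU x j.+1 - chebU x i * chebU x j.
Proof.
elim/nat_ind2: i => [||i IH1 IH2].
- by rewrite mul1r mul0r subr0.
- by rewrite add1n chebUSS /= mulr1 subr0 mul1r.
- rewrite !addSn chebUSS -addSn IH2 IH1 (chebUSS x i.+1) (chebUSS x i); ring.
Qed.

Lemma size_chebU (R : idomainType) j : size (chebU ('X : {poly R}) j) = j.
Proof.
elim/nat_ind2: j => [||j IH1 IH2]; first by rewrite size_poly0.
  by rewrite size_poly1.
have U0 : chebU ('X : {poly R}) j.+1 != 0 by rewrite -size_poly_eq0 IH2.
by rewrite chebUSS size_polyDl mulrC size_mulX // IH2 // size_polyN IH1.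
Qed.

Lemma chebU_inv (F : fieldType) (t : F) j : t != 0 ->
  chebU (t + t^-1) j * (t - t^-1) = t ^+ j - t^-1 ^+ j.
Proof.
move=> t0; elim/nat_ind2: j => [||j IH1 IH2].
- by rewrite mul0r !expr0 subrr.
- by rewrite mul1r !expr1.
- rewrite chebUSS mulrBl -mulrA IH2 IH1 !exprS !exprVn.
  by field; rewrite expf_neq0.
Qed.

(* In characteristic 2, U_{2m+1} is a square; this halves the degree. *)
Lemma chebU_odd_char2 (R : comNzRingType) (y : R) m : 2%:R = 0 :> R ->
  chebU y (m.*2).+1 = (chebU y m.+1 + chebU y m) ^+ 2.
Proof.
move=> two0; rewrite -addnn chebU_add.
set A := chebU y m.+1; set B := chebU y m.
have -> : (A + B) ^+ 2 = A * A - B * B + 2%:R * (A * B + B * B) by ring.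
by rewrite two0 mul0r addr0.
Qed.

Section Char2Roots.
Variables (L : fieldType) (m : nat) (theta : L).
Hypothesis two0 : 2%:R = 0 :> L.
Hypothesis prim : (m.*2).+1.-primitive_root theta.

Definition theta_sum (i : nat) : L := theta ^+ i + (theta ^+ i)^-1.

Lemma theta_neq0 : theta != 0.
Proof.
apply: contra_eq_neq (prim_expr_order prim) => ->.
by rewrite expr0n /= eq_sym oner_eq0.
Qed.

Lemma theta_expr_neq1 i : (0 < i <= m.*2)%N -> theta ^+ i != 1.
Proof.
move=> /andP[i0 im]; rewrite -(prim_order_dvd prim).
by apply: contraTN im => /(dvdn_leq i0); rewrite -ltnNge.
Qed.

(* Each theta^i + theta^-i with 1 <= i <= m is a root of U_{2m+1}; the
   alternative t = t^-1 is excluded since theta^(2i) != 1. *)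
Lemma chebU_theta_sum i : (0 < i <= m)%N -> chebU (theta_sum i) (m.*2).+1 = 0.
Proof.
move=> im; set t := theta ^+ i.
have t0 : t != 0 by rewrite expf_neq0 // theta_neq0.
have tN : t ^+ (m.*2).+1 = 1.
  by rewrite -exprM mulnC exprM (prim_expr_order prim) expr1n.
have tt1 : t * t != 1 by rewrite /t -exprD theta_expr_neq1 //; lia.
have /eqP := chebU_inv (m.*2).+1 t0.
rewrite exprVn tN invr1 subrr mulf_eq0 subr_eq0 => /orP[/eqP //|/eqP tV].
by move: tt1; rewrite {2}tV mulfV ?eqxx.
Qed.

(* These m roots are pairwise distinct: s + 1/s = r + 1/r forces s = r
   or s r = 1, and the latter is impossible for exponents in [1, m]. *)
Lemma theta_sum_inj i j : (0 < i <= m)%N -> (0 < j <= m)%N ->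
  theta_sum i = theta_sum j -> i = j.
Proof.
move=> im jm; rewrite /theta_sum => e.
set s := theta ^+ i in e; set r := theta ^+ j in e.
have s0 : s != 0 by rewrite expf_neq0 // theta_neq0.
have r0 : r != 0 by rewrite expf_neq0 // theta_neq0.
have /eqP : (s - r) * (1 - (s * r)^-1) = 0.
  by rewrite -[RHS](subrr (s + s^-1)) {2}e; field; rewrite s0 r0.
rewrite mulf_eq0 !subr_eq0 => /orP[|].
  by rewrite (eq_prim_root_expr prim) !modn_small; [move/eqP | lia | lia].
by rewrite eq_sym invr_eq1 /s /r -exprD (negbTE (theta_expr_neq1 _)) //; lia.
Qed.

(* They are all the roots: they are m distinct roots of U_{m+1} + U_m,
   a polynomial of degree m. *)
Lemma chebU_char2_rootsP (y : L) :
  chebU y (m.*2).+1 = 0 <-> exists i, [/\ (1 <= i)%N, (i <= m)%N & y = theta_sum i].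
Proof.
split; last by case=> i [i1 im ->]; apply: chebU_theta_sum; rewrite i1.
pose E : {poly L} := chebU 'X m.+1 + chebU 'X m.
have chebE z : chebU z (m.*2).+1 = E.[z] ^+ 2.
  by rewrite chebU_odd_char2 // hornerD !horner_chebU.
rewrite chebE => /eqP; rewrite expf_eq0 /= => /eqP Ey.
set rs := [seq theta_sum i | i <- iota 1 m].
have rootsE : all (root E) rs.
  apply/allP => z /mapP[i]; rewrite mem_iota => im ->.
  have /chebU_theta_sum : (0 < i <= m)%N by lia.
  by rewrite chebE => /eqP; rewrite expf_eq0.
have uniq_rs : uniq_roots rs.
  rewrite uniq_rootsE map_inj_in_uniq ?iota_uniq // => i j.
  by rewrite !mem_iota => im jm; apply: theta_sum_inj; lia.
have [q defE] := uniq_roots_prod_XsubC rootsE uniq_rs.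
have sizeE : size E = m.+1 by rewrite size_polyDl !size_chebU.
have Pne0 : \prod_(z <- rs) ('X - z%:P) != 0.
  by rewrite -size_poly_eq0 size_prod_XsubC.
have q0 : q != 0 by apply: contraPneq sizeE => q0; rewrite defE q0 mul0r size_poly0.
have /eqP/size_poly1P[c c0 qc] : size q = 1%N.
  move: sizeE; rewrite defE size_mul // size_prod_XsubC size_map size_iota.
  by rewrite addnS /= -[m.+1]add1n => /addIn.
move: Ey; rewrite defE qc hornerM hornerC horner_prod => /eqP.
rewrite mulf_eq0 (negbTE c0) prodf_seq_eq0 => /hasP[z /mapP[i]].
rewrite mem_iota => im -> /=; rewrite hornerXsubC subr_eq0 => /eqP ->.
by exists i; split => //; lia.
Qed.

End Char2Roots.

Section LinearCodes.
Variable F : fieldType.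

Lemma unitmx_kerP n (A : 'M[F]_n) :
  reflect (forall u : 'rV_n, u *m A = 0 -> u = 0) (A \in unitmx).
Proof.
rewrite -row_free_unit; apply: (iffP idP) => [freeA u /eqP | kerA].
  by rewrite mulmx_free_eq0 // => /eqP.
rewrite -kermx_eq0; apply/eqP/row_matrixP => i; rewrite row0.
by apply: kerA; rewrite -row_mul mulmx_ker row0.
Qed.

Lemma in_dualE m N (G : 'M[F]_(m, N)) x : in_dual G x <-> x *m G^T = 0.
Proof.
split => [xG_orth | xG c /submxP[v ->]]; last first.
  by rewrite trmx_mul mulmxA xG mul0mx.
apply/rowP => j; have := xG_orth (delta_mx 0 j *m G) (submxMl _ _).
by rewrite trmx_mul trmx_delta mulmxA -colE => /colP/(_ 0); rewrite !mxE.
Qed.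

(* Massey's criterion for a systematic generator matrix [I | A]: the code
   is LCD iff the Gram matrix G G^T = I + A A^T is invertible. *)
Lemma is_LCD_systematicP k n (A : 'M[F]_(k, n)) :
  is_LCD (row_mx 1%:M A) <-> (1%:M + A *m A^T) \in unitmx.
Proof.
set G := row_mx 1%:M A.
have GGt : G *m G^T = 1%:M + A *m A^T.
  by rewrite tr_row_mx mul_row_col trmx1 mulmx1.
have uG_eq0 u : u *m G = 0 -> u = 0.
  by rewrite mul_mx_row mulmx1 => /eqP; rewrite row_mx_eq0 => /andP[/eqP].
split => [LCD | /unitmx_kerP kerM x /submxP[u ->] /in_dualE].
  apply/unitmx_kerP => u uM; apply/uG_eq0/LCD; first exact: submxMl.
  by apply/in_dualE; rewrite -mulmxA GGt.
by rewrite -mulmxA GGt => /kerM ->; rewrite mul0mx.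
Qed.

End LinearCodes.

Lemma trid_toeplitz_tr (R : nzRingType) n (a b : R) :
  (trid_toeplitz n a b)^T = trid_toeplitz n a b.
Proof. by apply/matrixP => i j; rewrite !mxE eq_sym orbC. Qed.

Lemma add1_trid_toeplitz (R : nzRingType) n (a b : R) :
  1%:M + trid_toeplitz n a b = trid_toeplitz n (1 + a) b.
Proof. by apply/matrixP => i j; rewrite !mxE; case: eqP => _; rewrite ?add0r. Qed.

Lemma trid_toeplitzE (R : nzRingType) n (a b : R) (i j : 'I_n) :
  trid_toeplitz n a b i j =
  a * (i == j :> nat)%:R + b * (i == j.+1 :> nat)%:R + b * (i.+1 == j :> nat)%:R.
Proof.
rewrite mxE -val_eqE /= [(j.+1 == _)]eq_sym.
case: (i =P j :> nat) => ?; case: (i =P j.+1 :> nat) => ?; case: (i.+1 =P j :> nat) => ? /=;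
  rewrite ?mulr1 ?mulr0 ?addr0 ?add0r //; lia.
Qed.

Lemma sum_ord_delta (R : nzRingType) (f : nat -> R) N k :
  \sum_(i < N) f i * (i == k :> nat)%:R = if (k < N)%N then f k else 0.
Proof.
rewrite -(big_mkord xpredT (fun i => f i * (i == k)%:R)).
case: ltnP => kN; last first.
  rewrite big_nat_cond big1 // => i /andP[/andP[_ iN] _].
  by rewrite (ltn_eqF (leq_trans iN kN)) mulr0.
rewrite (bigD1_seq k) ?mem_index_iota ?iota_uniq //= eqxx mulr1 big1 ?addr0 //.
by move=> i /negbTE ->; rewrite mulr0.
Qed.

Lemma row_mul_trid_toeplitz (R : comNzRingType) n (a b : R) (s : nat -> R) :
  s 0%N = 0 -> s n.+1 = 0 -> forall j : 'I_n,
  ((\row_(i < n) s i.+1) *m trid_toeplitz n a b) 0 j = b * s j + a * s j.+1 + b * s j.+2.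
Proof.
move=> s0 sn j; rewrite mxE.
under eq_bigr do rewrite mxE trid_toeplitzE !mulrDr !(mulrCA (s _.+1)).
rewrite !big_split -!mulr_sumr /= !(sum_ord_delta (fun i => s i.+1)) ltn_ord.
have -> : \sum_(i < n) s i.+1 * (i.+1 == j :> nat)%:R = s j.
  have := sum_ord_delta s n.+1 j; rewrite big_ord_recl s0 mul0r add0r.
  by under eq_bigr do rewrite lift0; rewrite ltnS ltnW.
case: ltnP => [_|nj]; first by rewrite addrC addrA.
have -> : j.+2 = n.+1 by have := ltn_ord j; lia.
by rewrite sn mulr0 addrC addrA.
Qed.

Section TridiagonalKernel.
Variables (F : fieldType) (n : nat) (c b : F).
Hypothesis b0 : b != 0.
Let x := - c / b.

Lemma row_trid_toeplitz_eq0 (s : nat -> F) : s 0%N = 0 -> s n.+1 = 0 ->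
  (\row_(i < n) s i.+1) *m trid_toeplitz n c b = 0 <->
  (forall j, (j < n)%N -> s j.+2 = x * s j.+1 - s j).
Proof.
move=> s0 sn.
have entryE j : b * s j + c * s j.+1 + b * s j.+2 = b * (s j.+2 - (x * s j.+1 - s j)).
  by rewrite /x; field.
split => [/rowP kerT j jn | rec].
  move: (kerT (Ordinal jn)); rewrite row_mul_trid_toeplitz // entryE mxE.
  by move/eqP; rewrite mulf_eq0 (negbTE b0) subr_eq0 => /eqP.
by apply/rowP => j; rewrite row_mul_trid_toeplitz // entryE rec // subrr mulr0 mxE.
Qed.

Lemma chebU_solution (s : nat -> F) : s 0%N = 0 ->
  (forall j, (j < n)%N -> s j.+2 = x * s j.+1 - s j) ->
  forall j, (j <= n.+1)%N -> s j = s 1%N * chebU x j.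
Proof.
move=> s0 rec; elim/nat_ind2 => [_|_|j IH1 IH2 jn]; first by rewrite mulr0.
  by rewrite mulr1.
by rewrite rec ?IH1 ?IH2 ?chebUSS; [ring | lia | lia | lia].
Qed.

(* \hat T_n(c,b) is invertible iff U_{n+1}(-c/b) != 0: if U_{n+1} vanishes,
   (U_1, ..., U_n) is a nonzero kernel vector; otherwise the boundary
   condition s_{n+1} = s_1 U_{n+1} = 0 forces every kernel vector to 0. *)
Lemma trid_toeplitz_unitE :
  (trid_toeplitz n c b \in unitmx) = (chebU x n.+1 != 0).
Proof.
apply/unitmx_kerP/idP => [kerT | U0 u uT].
  apply/negP => /eqP U0.
  have /kerT/rowP chebU0 : (\row_(i < n) chebU x i.+1) *m trid_toeplitz n c b = 0.
    by apply/row_trid_toeplitz_eq0.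
  have [n0 | n_gt0] := posnP n; first by move: U0; rewrite n0 /= => /eqP; rewrite oner_eq0.
  by have /eqP := chebU0 (Ordinal n_gt0); rewrite !mxE oner_eq0.
pose s j := if j is j'.+1 then odflt 0 (omap (u 0) (insub j')) else 0.
have us : u = \row_(i < n) s i.+1 by apply/rowP => i; rewrite mxE /= valK.
have sn : s n.+1 = 0 by rewrite /s insubF ?ltnn.
rewrite us row_trid_toeplitz_eq0 // in uT.
have sU := chebU_solution (erefl : s 0%N = 0) uT.
have s1 : s 1%N = 0.
  have /esym/eqP := sU n.+1 (leqnn _).
  by rewrite sn mulf_eq0 (negbTE U0) orbF => /eqP.
by apply/rowP => i; rewrite us !mxE sU ?s1 ?mul0r // ltnW // ltnS ltn_ord.
Qed.

End TridiagonalKernel.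

Lemma LCD_char2_chebU (F : fieldType) n (a b : F) : 2%:R = 0 :> F -> b != 0 ->
  is_LCD (gen_C n a b) <-> chebU (- (1 + a) / b) n.+1 != 0.
Proof.
move=> two0 b0; rewrite is_LCD_systematicP trid_toeplitz_tr.
set T := trid_toeplitz n a b.
have TT : T + T = 0 by rewrite -mulr2n -scaler_nat two0 scale0r.
have -> : 1%:M + T *m T = (1%:M + T) *m (1%:M + T).
  by rewrite mulmxDl !mulmxDr !mul1mx mulmx1 -!addrA (addrA T T) TT add0r.
by rewrite unitmx_mul andbb add1_trid_toeplitz trid_toeplitz_unitE.
Qed.

Theorem theorem2p6 (F : finFieldType) (k : nat) (hq : #|F| = (2 ^ k)%N)
    (a b : F) (hb : b != 0) (n : nat) (hn : (2 <= n)%N)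
    (hcop : coprime n.+1 #|F|) :
  ~~ odd n /\
  (forall (L : fieldType) (f : {rmorphism F -> L}) (theta : L),
     n.+1.-primitive_root theta ->
     (is_LCD (gen_C n a b) <->
      ~ (exists i : nat, [/\ (1 <= i)%N, (i <= n./2)%N &
           f (a / b) = f (- 1 / b) + theta ^+ i + (theta ^+ i)^-1]))).
Proof.
have two0 : 2%:R = 0 :> F by apply/pcharf0/(card_finPcharP hq).
have k_gt0 : (0 < k)%N by case: k hq => // hq; have := finNzRing_gt1 F; rewrite hq.
have even_n : ~~ odd n by move: hcop; rewrite hq coprime_pexpr // coprimen2 /=.
split => // L f theta prim.
have two0L : 2%:R = 0 :> L by rewrite -(rmorph_nat f) two0 rmorph0.
set m := n./2.
have n_double : n = m.*2 by rewrite -[LHS]odd_double_half (negbTE even_n).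
rewrite n_double in prim.
set x := - (1 + a) / b.
have shift : f (a / b) = f (- 1 / b) + f x.
  rewrite -rmorphD; congr (f _); apply/eqP; rewrite -subr_eq0.
  have -> : a / b - (- 1 / b + x) = 2%:R * (a + 1) / b by rewrite /x; field.
  by rewrite two0 !mul0r.
rewrite LCD_char2_chebU // -(fmorph_eq0 f) rmorph_chebU -/x n_double.
split => [/negP noroot [i [i1 im e]] | noroot].
  apply/noroot/eqP/(chebU_char2_rootsP two0L prim); exists i; split => //.
  by apply: (addrI (f (- 1 / b))); rewrite -shift e addrA.
apply/negP => /eqP/(chebU_char2_rootsP two0L prim)[i [i1 im e]].
by apply: noroot; exists i; split => //; rewrite shift e addrA.
Qed.
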